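(* Let $m\ge 4$, $t$, $g$ be positive integers with $t\ge g+1$, and put $\alpha=(t-1)-g$. Consider a bin configuration of the game $G(m,t,g)$ in which every current bin load is at most $t-1$. Suppose there is a bin $B$ such that the sum of the loads of the other $m-1$ bins is at least $(m-1)g-\alpha$. Then Algorithm wins from this configuration.
   Context: Bin stretching game $G(m,t,g)$: there are $m$ bins. In each round Adversary presents an item of positive integer size, and Algorithm then irrevocably places it into one of the $m$ bins. The load of a bin is the total size of the items in it. A bin configuration consists of: - the current loads $L_1,\dots,L_m$ of the bins, and - the multiset $\mathcal I$ of items presented so far, placed so that the bins have exactly these loads. ''Algorithm wins from this configuration'' means the following. There is an online rule which, given the configuration and the items presented so far, assigns each newly presented item to a bin. This rule must guarantee: for every finite sequence $e_1,\dots,e_j$ of further positive-integer items such that the multiset $\mathcal I\cup\{e_1,\dots,e_j\}$ can be partitioned into $m$ parts each of total size at most $g$, every bin load is at most $t-1$ after these items are placed. *)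

From mathcomp Require Import all_boot.
Set Implicit Arguments. Unset Strict Implicit. Unset Printing Implicit Defensive.

Definition bin_sum (m : nat) (p : nat -> 'I_m) (s : seq nat) (i : 'I_m) : nat :=
  \sum_(k < size s | p k == i) nth 0 s k.

Definition packable (m g : nat) (s : seq nat) : Prop :=
  exists p : nat -> 'I_m, forall i : 'I_m, bin_sum p s i <= g.

Definition bin_config (m : nat) (L : 'I_m -> nat) (I : seq nat) : Prop :=
  all (fun x => 0 < x) I /\
  exists p : nat -> 'I_m, forall i : 'I_m, L i = bin_sum p I i.

(* An online rule: given the further items presented so far (e_1..e_{k-1})
   and the new item e_k, choose a bin.  Load of bin i after placing es. *)
Definition load_after (m : nat) (L : 'I_m -> nat) (rule : seq nat -> nat -> 'I_m)
    (es : seq nat) (i : 'I_m) : nat :=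
  L i + \sum_(k < size es | rule (take k es) (nth 0 es k) == i) nth 0 es k.

Definition alg_wins (m t g : nat) (L : 'I_m -> nat) (I : seq nat) : Prop :=
  exists rule : seq nat -> nat -> 'I_m,
    forall es : seq nat, all (fun x => 0 < x) es ->
      packable m g (I ++ es) ->
      forall i : 'I_m, load_after L rule es i <= t - 1.

From mathcomp Require Import all_boot.
From mathcomp Require Import zify.

Set Implicit Arguments.
Unset Strict Implicit.
Unset Printing Implicit Defensive.

(* Algorithm puts every further item into B.  Packability bounds the total size
   of all items by m g, and the bins other than B already hold at least
   m g - (t - 1) of it, so B never exceeds t - 1; the other bins do not change. *)

Lemma sum_nth_sumn (s : seq nat) : \sum_(k < size s) nth 0 s k = sumn s.
Proof. by rewrite sumnE (big_nth 0) big_mkord. Qed.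

Lemma sum_bin_sum m (p : nat -> 'I_m) (s : seq nat) :
  \sum_(i < m) bin_sum p s i = sumn s.
Proof.
rewrite /bin_sum -sum_nth_sumn (exchange_big_dep xpredT) //=.
by apply: eq_bigr => k _; rewrite (big_pred1 (p k)) // => i; rewrite /= eq_sym.
Qed.

Lemma packable_sumn_le m g (s : seq nat) : packable m g s -> sumn s <= m * g.
Proof.
move=> [p Hp]; rewrite -(sum_bin_sum p) -[m in m * g]card_ord -sum_nat_const.
exact: leq_sum.
Qed.

Lemma bin_config_sum m (L : 'I_m -> nat) (I : seq nat) :
  bin_config L I -> \sum_(i < m) L i = sumn I.
Proof.
by move=> [_ [p Hp]]; rewrite -(sum_bin_sum p); apply: eq_bigr => i _.
Qed.

Lemma load_after_const m (L : 'I_m -> nat) (B : 'I_m) (es : seq nat) (i : 'I_m) :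
  load_after L (fun _ _ => B) es i = L i + (B == i) * sumn es.
Proof.
rewrite /load_after; case: eqP => [_ | _]; last by rewrite big_pred0.
by rewrite mul1n (eq_bigl xpredT) ?sum_nth_sumn.
Qed.

Theorem mainTheorem1 (m t g : nat) (L : 'I_m -> nat) (I : seq nat) :
  4 <= m -> 0 < t -> 0 < g -> g + 1 <= t ->
  bin_config L I ->
  (forall i : 'I_m, L i <= t - 1) ->
  (exists B : 'I_m,
      (m - 1) * g - ((t - 1) - g) <= \sum_(i < m | i != B) L i) ->
  @alg_wins m t g L I.
Proof.
move=> _ _ _ Htg HIL HL [B HB].
exists (fun _ _ => B) => es _ Hpack i.
rewrite load_after_const; case: eqP => [<- | _]; last by rewrite addn0.
have Htotal := packable_sumn_le Hpack; rewrite sumn_cat in Htotal.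
have HsumL := bin_config_sum HIL; rewrite (bigD1 B) //= in HsumL.
have Hmg : (m - 1) * g = m * g - g by rewrite mulnBl mul1n.
move: HB HsumL; rewrite Hmg; set S := \sum_(i < m | i != B) L i; lia.
Qed.
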